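(* Let $R$ be a finite commutative local Frobenius ring with residue field $\mathbb{F}_q$. For $i=1,2$, let $C_i$ be a non-free linear code of length $n$ over $R$, and suppose $C_1+C_2=R^n$. Then $C_1\cap C_2\neq\{\mathbf{0}\}$; that is, $\{C_1,C_2\}$ is an $\ell$-DLIP for some $\ell\neq 0$.
   Context: A linear code of length $n$ over $R$ is an $R$-submodule of $R^n$; it is free if it is a free $R$-module. $\dim(C):=\log_q|C|$, and a pair $\{C,D\}$ is an $\ell$-DLIP if $\dim(C\cap D)=\ell$. *)

From HB Require Import structures.
From mathcomp Require Import all_boot all_order all_algebra.
Set Implicit Arguments. Unset Strict Implicit. Unset Printing Implicit Defensive.
Import GRing.Theory.
Local Open Scope ring_scope.

Section RingDefs.
Variable R : finComUnitRingType.

Definition is_ideal (I : {set R}) : Prop :=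
  [/\ (0 : R) \in I,
      (forall x y, x \in I -> y \in I -> x + y \in I) &
      (forall r x, x \in I -> r * x \in I)].

Definition is_maximal_ideal (I : {set R}) : Prop :=
  [/\ is_ideal I, I != [set: R] &
      forall J, is_ideal J -> J != [set: R] -> I \subset J -> J = I].

Definition is_minimal_ideal (I : {set R}) : Prop :=
  [/\ is_ideal I, I != [set 0] &
      forall J, is_ideal J -> J != [set 0] -> J \subset I -> J = I].

Definition local_ring : Prop :=
  exists M, is_maximal_ideal M /\ forall J, is_maximal_ideal J -> J = M.

(* A finite commutative local ring is Frobenius iff it has a unique
   minimal ideal (simple socle). *)
Definition local_frobenius_ring : Prop :=
  local_ring /\ exists I, is_minimal_ideal I /\ forall J, is_minimal_ideal J -> J = I.

Definition linear_code (n : nat) (C : {set 'rV[R]_n}) : Prop :=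
  [/\ (0 : 'rV[R]_n) \in C,
      (forall x y, x \in C -> y \in C -> x + y \in C) &
      (forall (r : R) x, x \in C -> r *: x \in C)].

Definition free_code (n : nat) (C : {set 'rV[R]_n}) : Prop :=
  exists s : seq 'rV[R]_n,
    [/\ {subset s <= C},
        (forall x, x \in C -> exists a : 'I_(size s) -> R,
             x = \sum_(i < size s) a i *: s`_i) &
        (forall a : 'I_(size s) -> R,
             \sum_(i < size s) a i *: s`_i = 0 -> forall i, a i = 0)].

End RingDefs.

(* Over a local ring, if x + y is a unit then so is x or y.  Hence if
   R^n = A (+) B and e_1 = a + b with a in A, b in B, one of a, b, say a,
   has a unit first coordinate.  Eliminating the first coordinate with the
   pivot a maps R^n onto R^(n-1) with kernel R a, which lies in A and meets
   B trivially, and maps A (+) B to a decomposition of R^(n-1).  By induction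
   both images are free; lifting their bases (and adding a for A) shows that
   A and B are free.  Thus two non-free codes cannot be complementary; only
   the locality of R and the non-freeness of C1 are needed. *)

Set Warnings "-notation-overridden -ambiguous-paths -redundant-canonical-projection".
From HB Require Import structures.
From mathcomp Require Import all_boot all_order all_algebra.
From mathcomp Require Import ring.
Set Implicit Arguments. Unset Strict Implicit. Unset Printing Implicit Defensive.
Import GRing.Theory.
Local Open Scope ring_scope.

Section Codes.
Variable R : finComUnitRingType.
Implicit Types (n m k : nat).

Definition idealb (I : {set R}) : bool :=
  [&& 0 \in I, [forall x, forall y, (x \in I) ==> (y \in I) ==> (x + y \in I)]
    & [forall r, forall x, (x \in I) ==> (r * x \in I)]].

Lemma idealP (I : {set R}) : reflect (is_ideal I) (idealb I).
Proof.
apply: (iffP and3P) => [[I0 /'forall_forallP ID /'forall_forallP IM]|[I0 ID IM]].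
  split=> // [x y xI yI|r x xI]; last exact: (implyP (IM r x)).
  by move/implyP: (ID x y) => /(_ xI)/implyP; apply.
split=> //; apply/'forall_forallP => x y; apply/implyP => xI; last exact: IM.
by apply/implyP; apply: ID.
Qed.

Lemma principal_ideal (x : R) : is_ideal [set r * x | r : R].
Proof.
split; first by apply/imsetP; exists 0; rewrite ?mul0r.
  move=> _ _ /imsetP[r _ ->] /imsetP[s _ ->].
  by apply/imsetP; exists (r + s); rewrite ?mulrDl.
by move=> t _ /imsetP[r _ ->]; apply/imsetP; exists (t * r); rewrite ?mulrA.
Qed.

Lemma ideal_sub_maximal (I : {set R}) :
  is_ideal I -> I != setT -> exists2 J, is_maximal_ideal J & I \subset J.
Proof.
move=> idI IT; pose P J := [&& idealb J, J != setT & I \subset J].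
have PI : P I by rewrite /P subxx IT !andbT; apply/idealP.
have [J /and3P[/idealP idJ JT IJ] Jmax] := arg_maxnP (fun J : {set R} => #|J|) PI.
exists J => //; split=> // J' idJ' J'T JJ'; apply/eqP; rewrite eq_sym eqEcard JJ'.
by apply: Jmax; rewrite /P J'T (subset_trans IJ JJ') !andbT; apply/idealP.
Qed.

Lemma local_unitrD : local_ring R ->
  forall x y : R, x + y \is a GRing.unit -> x \is a GRing.unit \/ y \is a GRing.unit.
Proof.
case=> M [[[_ MD MM] MT _] M_uniq].
have nonunit_M x : x \isn't a GRing.unit -> x \in M.
  move=> xN; have [|J Jmax xJ] := ideal_sub_maximal (principal_ideal x).
    apply: contraNneq xN => /setP/(_ 1); rewrite !inE => /imsetP[r _ r1].
    by apply/unitrPr; exists r; rewrite mulrC.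
  rewrite -(M_uniq J Jmax); apply: (subsetP xJ).
  by apply/imsetP; exists 1; rewrite ?mul1r.
move=> x y xyU; case: (boolP (x \is a GRing.unit)) => [|xN]; first by left.
case: (boolP (y \is a GRing.unit)) => [|yN]; first by right.
have xyM : x + y \in M by apply: MD; apply: nonunit_M.
case/eqP: MT; apply/setP => r; rewrite inE -(mulrVK xyU r) MM //.
Qed.


Lemma linear_code_sum n (C : {set 'rV[R]_n}) k (c : 'I_k -> R) (g : 'I_k -> 'rV_n) :
  linear_code C -> (forall i, g i \in C) -> \sum_i c i *: g i \in C.
Proof. by case=> C0 CD CZ Cg; elim/big_ind: _ => // i _; apply: CZ. Qed.

Lemma linear_code_mulmx n (C : {set 'rV[R]_n}) k (M : 'M_(k, n)) u :
  linear_code C -> (forall i, row i M \in C) -> u *m M \in C.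
Proof. by move=> codeC MC; rewrite mulmx_sum_row; apply: linear_code_sum. Qed.

Lemma linear_codeB n (C : {set 'rV[R]_n}) x y :
  linear_code C -> x \in C -> y \in C -> x - y \in C.
Proof. by case=> _ CD CZ xC yC; rewrite -scaleN1r; apply/CD/CZ. Qed.

Lemma linear_code_image n m (f : {linear 'rV[R]_n -> 'rV[R]_m}) (C : {set 'rV_n}) :
  linear_code C -> linear_code (f @: C).
Proof.
case=> C0 CD CZ; split.
- by rewrite -(linear0 f) imset_f.
- by move=> _ _ /imsetP[x xC ->] /imsetP[y yC ->]; rewrite -linearD imset_f ?CD.
- by move=> r _ /imsetP[x xC ->]; rewrite -linearZ imset_f ?CZ.
Qed.

Definition basis_mx n k (C : {set 'rV[R]_n}) (M : 'M[R]_(k, n)) : Prop :=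
  [/\ forall u, u *m M \in C,
      forall x, x \in C -> exists u, x = u *m M &
      forall u : 'rV_k, u *m M = 0 -> u = 0].

Definition free_mx n (C : {set 'rV[R]_n}) := exists k (M : 'M[R]_(k, n)), basis_mx C M.

Lemma free_mx_code n (C : {set 'rV[R]_n}) : free_mx C -> free_code C.
Proof.
case=> k [M [MC Mspan Mfree]].
pose s := [seq row i M | i <- enum 'I_k].
have size_s : size s = k by rewrite size_map size_enum_ord.
have nth_s (i : 'I_(size s)) : s`_i = row (cast_ord size_s i) M.
  rewrite (nth_map (cast_ord size_s i)) ?size_enum_ord -?size_s //.
  by congr row; apply: val_inj; rewrite /= nth_enum_ord -?size_s.
have comb_s (a : 'I_(size s) -> R) :
    \sum_(i < size s) a i *: s`_i = (\row_j a (cast_ord (esym size_s) j)) *m M.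
  rewrite mulmx_sum_row (reindex (cast_ord size_s)) /=; last first.
    by exists (cast_ord (esym size_s)) => i _; rewrite ?cast_ordK ?cast_ordKV.
  by apply: eq_bigr => i _; rewrite mxE cast_ordK nth_s.
exists s; split.
- by move=> _ /mapP[i _ ->]; rewrite rowE MC.
- move=> x /Mspan[u ->]; exists (fun i => u 0 (cast_ord size_s i)).
  by rewrite comb_s; congr (_ *m _); apply/rowP => j; rewrite !mxE cast_ordKV.
- move=> a; rewrite comb_s => /Mfree/rowP a0 i.
  by have := a0 (cast_ord size_s i); rewrite !mxE cast_ordK.
Qed.

Lemma basis_mx0 n (C : {set 'rV[R]_n}) :
  0 \in C -> (forall x, x \in C -> x = 0) -> basis_mx C (0 : 'M_(0, n)).
Proof.
move=> C0 C_0; split=> [u|x /C_0->|u _]; rewrite ?mulmx0 ?thinmx0 //.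
by exists 0; rewrite mulmx0.
Qed.

Lemma basis_mx_line n (C : {set 'rV[R]_n}) (a : 'rV_n) :
  (forall c, c *: a = 0 -> c = 0) -> (forall x, x \in C <-> exists c, x = c *: a) ->
  basis_mx C a.
Proof.
move=> a_free Ca.
have mul_a (u : 'rV_1) : u *m a = u 0 0 *: a by rewrite {1}(mx11_scalar u) mul_scalar_mx.
split=> [u|x /Ca[c ->]|u].
- by rewrite mul_a; apply/Ca; exists (u 0 0).
- by exists c%:M; rewrite mul_scalar_mx.
- by rewrite mul_a => /a_free u0; apply/rowP => i; rewrite ord1 u0 mxE.
Qed.

Lemma basis_mx_lift n m (f : {linear 'rV[R]_n -> 'rV[R]_m}) (A : {set 'rV_n})
    k (M : 'M_(k, m)) :
  linear_code A -> basis_mx (f @: A) M ->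
  exists N : 'M_(k, n), (forall u, u *m N \in A) /\ (forall u, f (u *m N) = u *m M).
Proof.
move=> codeA [MfA _ _].
have /fin_all_exists[g g_lift] i : exists x, x \in A /\ f x = row i M.
  by rewrite rowE; have /imsetP[x xA ->] := MfA (delta_mx 0 i); exists x.
exists (\matrix_i g i); split=> [u|u].
  by apply: linear_code_mulmx => // i; rewrite rowK; case: (g_lift i).
rewrite !mulmx_sum_row linear_sum; apply: eq_bigr => i _.
by rewrite linearZ rowK; case: (g_lift i) => _ ->.
Qed.

Lemma basis_mx_ext n m (f : {linear 'rV[R]_n -> 'rV[R]_m}) (A : {set 'rV_n})
    k1 k2 (K : 'M_(k1, n)) (M : 'M_(k2, m)) :
  linear_code A -> basis_mx [set x in A | f x == 0] K -> basis_mx (f @: A) M ->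
  free_mx A.
Proof.
move=> codeA [KA Kspan Kfree] fAM; have [N [NA fN]] := basis_mx_lift codeA fAM.
have [_ Mspan Mfree] := fAM; have [_ AD _] := codeA.
have K_ker w : w *m K \in A /\ f (w *m K) = 0.
  by have := KA w; rewrite inE => /andP[-> /eqP].
exists (k1 + k2)%N, (col_mx K N); split=> [u|x xA|u].
- by rewrite -[u]hsubmxK mul_row_col AD ?NA ?(proj1 (K_ker _)).
- have [v fxv] := Mspan _ (imset_f f xA).
  have : x - v *m N \in [set x in A | f x == 0].
    by rewrite inE linear_codeB ?NA //= linearB fN fxv subrr.
  by case/Kspan=> w xvw; exists (row_mx w v); rewrite mul_row_col -xvw subrK.
- rewrite -[u]hsubmxK mul_row_col => uKN0.
  have := congr1 f uKN0; rewrite linearD (proj2 (K_ker _)) add0r fN linear0.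
  move=> /Mfree v0; move: uKN0; rewrite v0 mul0mx addr0 => /Kfree->; exact: row_mx0.
Qed.

Definition pivot_proj n (a x : 'rV[R]_n.+1) : 'rV[R]_n :=
  \row_j (x 0 (lift 0 j) - x 0 0 / a 0 0 * a 0 (lift 0 j)).

Fact pivot_proj_is_linear n (a : 'rV[R]_n.+1) : linear (pivot_proj a).
Proof. by move=> c x y; apply/rowP => j; rewrite !mxE; ring. Qed.

HB.instance Definition _ n (a : 'rV[R]_n.+1) :=
  GRing.isLinear.Build R 'rV[R]_n.+1 'rV[R]_n _ (pivot_proj a) (pivot_proj_is_linear a).

Lemma pivot_proj_surj n (a : 'rV[R]_n.+1) z : exists y, pivot_proj a y = z.
Proof.
exists (\row_i oapp (z 0) 0 (unlift 0 i)).
by apply/rowP => j; rewrite !mxE liftK unlift_none !mul0r subr0.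
Qed.

Definition complementary n (A B : {set 'rV[R]_n}) : Prop :=
  [/\ linear_code A, linear_code B,
      forall x, exists a b, [/\ a \in A, b \in B & x = a + b] &
      forall x, x \in A -> x \in B -> x = 0].

Lemma complementaryC n (A B : {set 'rV[R]_n}) : complementary A B -> complementary B A.
Proof.
case=> codeA codeB AB_span AB_0; split=> // [x|x xB xA]; last exact: AB_0.
by have [a [b [aA bB ->]]] := AB_span x; exists b, a; rewrite addrC.
Qed.

Lemma complementary_free0 (A B : {set 'rV[R]_0}) :
  complementary A B -> free_mx A /\ free_mx B.
Proof.
have free0 (C : {set 'rV[R]_0}) : linear_code C -> free_mx C.
  by case=> C0 _ _; exists 0%N, 0; apply: basis_mx0 => // x _; apply: thinmx0.
by case=> codeA codeB _ _; split; apply: free0.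
Qed.

Section Pivot.
Variables (n : nat) (a : 'rV[R]_n.+1).
Hypothesis a0_unit : a 0 0 \is a GRing.unit.

Lemma pivot_proj_pivot : pivot_proj a a = 0.
Proof. by apply/rowP => j; rewrite !mxE divrr // mul1r subrr. Qed.

Lemma pivot_proj_eq0 x : pivot_proj a x = 0 -> x = (x 0 0 / a 0 0) *: a.
Proof.
move=> /rowP x_ker; apply/rowP => i; rewrite mxE.
case: (unliftP 0 i) => [j ->|->]; last by rewrite mulrVK.
by have /eqP := x_ker j; rewrite !mxE subr_eq0 => /eqP.
Qed.

Lemma scale_pivot_eq0 c : c *: a = 0 -> c = 0.
Proof.
by move=> /rowP/(_ 0); rewrite !mxE => /(canRL (mulrK a0_unit)); rewrite mul0r.
Qed.

Lemma free_mx_pivot_ker (A : {set 'rV[R]_n.+1}) :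
  linear_code A -> a \in A -> free_mx (pivot_proj a @: A) -> free_mx A.
Proof.
move=> codeA aA [k [M fAM]]; apply: (basis_mx_ext (K := a) codeA _ fAM).
have [_ _ AZ] := codeA.
apply: basis_mx_line; first exact: scale_pivot_eq0.
move=> x; rewrite inE; split=> [/andP[_ /eqP/pivot_proj_eq0 ->]|[c ->]].
  by exists (x 0 0 / a 0 0).
by rewrite AZ //= linearZ /= pivot_proj_pivot scaler0.
Qed.

Lemma free_mx_pivot_inj (B : {set 'rV[R]_n.+1}) :
  linear_code B -> (forall c, c *: a \in B -> c *: a = 0) ->
  free_mx (pivot_proj a @: B) -> free_mx B.
Proof.
move=> codeB Ba0 [k [M fBM]]; apply: (basis_mx_ext (K := 0 : 'M_(0, _)) codeB _ fBM).
have [B0 _ _] := codeB.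
apply: basis_mx0 => [|x]; first by rewrite inE B0 linear0 /=.
by rewrite inE => /andP[xB /eqP/pivot_proj_eq0 xa]; rewrite xa Ba0 -?xa.
Qed.

Lemma complementary_pivot_proj (A B : {set 'rV[R]_n.+1}) :
  complementary A B -> a \in A -> complementary (pivot_proj a @: A) (pivot_proj a @: B).
Proof.
case=> codeA codeB AB_span AB_0 aA; have [_ AD AZ] := codeA.
split; try exact: linear_code_image.
- move=> z; have [y <-] := pivot_proj_surj a z; have [x [b [xA bB ->]]] := AB_span y.
  by exists (pivot_proj a x), (pivot_proj a b); rewrite linearD !imset_f.
- move=> _ /imsetP[x xA ->] /imsetP[y yB fxy].
  have /pivot_proj_eq0 yx : pivot_proj a (y - x) = 0 by rewrite linearB /= -fxy subrr.
  have yA : y \in A by rewrite -(subrK x y) yx AD ?AZ.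
  by rewrite fxy (AB_0 y yA yB) linear0.
Qed.

Lemma complementary_free_pivot (A B : {set 'rV[R]_n.+1}) :
  (forall A' B' : {set 'rV[R]_n}, complementary A' B' -> free_mx A' /\ free_mx B') ->
  complementary A B -> a \in A -> free_mx A /\ free_mx B.
Proof.
move=> IH AB aA; have [codeA codeB _ AB_0] := AB; have [_ _ AZ] := codeA.
have [fA fB] := IH _ _ (complementary_pivot_proj AB aA); split.
  exact: free_mx_pivot_ker fA.
by apply: free_mx_pivot_inj fB => // c /(AB_0 _ (AZ c a aA)).
Qed.

End Pivot.

Lemma complementary_free
    (unitrD : forall x y : R, x + y \is a GRing.unit ->
       x \is a GRing.unit \/ y \is a GRing.unit) n (A B : {set 'rV[R]_n}) :
  complementary A B -> free_mx A /\ free_mx B.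
Proof.
elim: n A B => [|n IH] A B AB; first exact: complementary_free0.
have [_ _ AB_span _] := AB; have [a [b [aA bB e00]]] := AB_span (delta_mx 0 0).
have /unitrD[a0|b0] : a 0 0 + b 0 0 \is a GRing.unit.
  have := congr1 (fun v : 'rV[R]_n.+1 => v 0 0) e00.
  by rewrite !mxE eqxx => <-; apply: unitr1.
exact: (complementary_free_pivot a0 IH AB aA).
by have [] := complementary_free_pivot b0 IH (complementaryC AB) bB.
Qed.

End Codes.

Theorem theorem3p16 (R : finComUnitRingType) (n : nat)
    (C1 C2 : {set 'rV[R]_n}) :
  local_frobenius_ring R ->
  linear_code C1 -> linear_code C2 ->
  ~ free_code C1 -> ~ free_code C2 ->
  (forall x : 'rV[R]_n, exists c1 c2, [/\ c1 \in C1, c2 \in C2 & x = c1 + c2]) ->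
  C1 :&: C2 != [set 0].
Proof.
move=> [localR _] codeC1 codeC2 nfree1 _ C12_span; apply/negP => /eqP C12_0.
have C12 : complementary C1 C2.
  split=> // x x1 x2; apply/set1P; rewrite -C12_0; exact/setIP.
by apply/nfree1/free_mx_code; case: (complementary_free (local_unitrD localR) C12).
Qed.
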